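(* Let $\gamma>0$ and let $W\in\mathbb{R}^{\ell\times\ell}$ be symmetric positive definite. Define $$A_\gamma=\tilde A+\gamma B^TW^{-1}B,\qquad \mathcal A_\gamma=\begin{bmatrix}A_\gamma & B^T\\ B & 0\end{bmatrix},\qquad \mathcal P_\gamma=\begin{bmatrix}A_\gamma & B^T\\ 0 & -\tfrac1\gamma W\end{bmatrix}.$$ Then all eigenvalues of $\mathcal P_\gamma^{-1}\mathcal A_\gamma$ are real and positive, and $$\operatorname{Spec}(\mathcal P_\gamma^{-1}\mathcal A_\gamma)\subseteq[\eta,1],\qquad \eta:=\min_{x\in\mathcal S,\,x\neq 0}\frac{\gamma\, x^TB^TW^{-1}Bx}{x^T\tilde A x+\gamma\, x^TB^TW^{-1}Bx},$$ where $\mathcal S:=\{v\in\mathbb{R}^{n+m}:\ u^T\tilde A v=0 \text{ for all } u\in\ker(B)\}$. Moreover, $\lambda=1$ is an eigenvalue of $\mathcal P_\gamma^{-1}\mathcal A_\gamma$ of algebraic multiplicity at least $n+m$.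
   Context: Setting: $\Omega\subset\mathbb{R}^d$ ($d\in\{2,3\}$) is a bounded Lipschitz domain and $\Omega_2$ a Lipschitz subdomain with $\overline{\Omega_2}\subset\Omega$; $\beta,\beta_2$ are constants with $\beta_2>\beta>0$. Independent quasi-uniform quadrilateral/hexahedral meshes $\mathcal T_h$ of $\Omega$ (size $h_\Omega$) and $\mathcal T_{2,h}$ of $\Omega_2$ (size $h_{\Omega_2}$) are given, and $V_h\subset H^1_0(\Omega)$, $V_{2,h}\subset H^1(\Omega_2)$ are the continuous piecewise $\mathcal Q^1$ (degree at most one in each variable) Lagrange finite element spaces on these meshes, and the multiplier space is $\Lambda_h=V_{2,h}$ (more generally, any inf-sup stable choice). Bases: $\{\varphi_i\}_{i=1}^n$ of $V_h$, $\{\phi_j\}_{j=1}^m$ of $V_{2,h}$, $\{\psi_k\}_{k=1}^\ell$ of $\Lambda_h$. Matrices: $A\in\mathbb{R}^{n\times n}$, $A_{ij}=\int_\Omega\beta\nabla\varphi_i\cdot\nabla\varphi_j$; $A_2\in\mathbb{R}^{m\times m}$, $(A_2)_{ij}=\int_{\Omega_2}(\beta_2-\beta)\nabla\phi_i\cdot\nabla\phi_j$; $C\in\mathbb{R}^{\ell\times n}$, $C_{ki}=\int_{\Omega_2}\psi_k\varphi_i$; $C_2\in\mathbb{R}^{\ell\times m}$, $(C_2)_{kj}=\int_{\Omega_2}\psi_k\phi_j$. Set $B=[\,C\ \ -C_2\,]\in\mathbb{R}^{\ell\times(n+m)}$ and $\tilde A=\operatorname{diag}(A,A_2)$. Standing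 facts of this setting: $A$ is symmetric positive definite, $A_2$ is symmetric positive semidefinite with kernel spanned by the constant vector, $C$ has full row rank, $\ker(\tilde A)\cap\ker(B)=\{0\}$, and the saddle point matrix $\begin{bmatrix}\tilde A& B^T\\ B&0\end{bmatrix}$ is nonsingular (the discrete problem is uniquely solvable); consequently $A_\gamma$ is symmetric positive definite. *)

From HB Require Import structures.
From mathcomp Require Import all_boot all_order all_algebra.
From mathcomp Require Import complex.
Set Implicit Arguments. Unset Strict Implicit. Unset Printing Implicit Defensive.
Import Order.TTheory GRing.Theory Num.Theory.
Local Open Scope ring_scope.

Definition bform (R : pzRingType) (k : nat) (x : 'cV[R]_k) (M : 'M[R]_k) (y : 'cV[R]_k) : R :=
  (x^T *m M *m y) ord0 ord0.

Definition sym_mx (R : pzRingType) (k : nat) (M : 'M[R]_k) : Prop := M^T = M.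

Definition spd (R : numDomainType) (k : nat) (M : 'M[R]_k) : Prop :=
  sym_mx M /\ forall x : 'cV[R]_k, x != 0 -> 0 < bform x M x.

Definition spsd (R : numDomainType) (k : nat) (M : 'M[R]_k) : Prop :=
  sym_mx M /\ forall x : 'cV[R]_k, 0 <= bform x M x.

Definition Atilde (R : pzRingType) (n m : nat) (A : 'M[R]_n) (A2 : 'M[R]_m) : 'M[R]_(n + m) :=
  block_mx A 0 0 A2.

Definition Bmat (R : pzRingType) (n m l : nat) (C : 'M[R]_(l, n)) (C2 : 'M[R]_(l, m))
  : 'M[R]_(l, n + m) := row_mx C (- C2).

Definition Agamma (R : fieldType) (N l : nat) (At : 'M[R]_N) (B : 'M[R]_(l, N))
  (W : 'M[R]_l) (gamma : R) : 'M[R]_N :=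
  At + gamma *: (B^T *m invmx W *m B).

Definition calA (R : fieldType) (N l : nat) (At : 'M[R]_N) (B : 'M[R]_(l, N))
  (W : 'M[R]_l) (gamma : R) : 'M[R]_(N + l) :=
  block_mx (Agamma At B W gamma) B^T B 0.

Definition calP (R : fieldType) (N l : nat) (At : 'M[R]_N) (B : 'M[R]_(l, N))
  (W : 'M[R]_l) (gamma : R) : 'M[R]_(N + l) :=
  block_mx (Agamma At B W gamma) B^T 0 (- gamma^-1 *: W).

Definition inS (R : pzRingType) (N l : nat) (At : 'M[R]_N) (B : 'M[R]_(l, N)) (v : 'cV[R]_N) : Prop :=
  forall u : 'cV[R]_N, B *m u = 0 -> bform u At v = 0.

Definition eta_ratio (R : fieldType) (N l : nat) (At : 'M[R]_N) (B : 'M[R]_(l, N))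
  (W : 'M[R]_l) (gamma : R) (x : 'cV[R]_N) : R :=
  (gamma * bform x (B^T *m invmx W *m B) x) /
  (bform x At x + gamma * bform x (B^T *m invmx W *m B) x).

Definition is_eta (R : realFieldType) (N l : nat) (At : 'M[R]_N) (B : 'M[R]_(l, N))
  (W : 'M[R]_l) (gamma : R) (eta : R) : Prop :=
  (exists2 x : 'cV[R]_N, (inS At B x /\ x != 0) & eta_ratio At B W gamma x = eta) /\
  (forall x : 'cV[R]_N, inS At B x -> x != 0 -> eta <= eta_ratio At B W gamma x).

Definition cplx_mx (R : rcfType) (k : nat) (M : 'M[R]_k) : 'M[R[i]]_k :=
  map_mx (real_complex R) M.

(* A left eigenvector (x, y) of the pencil calA - z calP with z outside {0, 1}
   satisfies z x A_gamma = gamma x G, where G = B^T W^-1 B, so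
   z = gamma x^* G x / x^* A_gamma x is a real Rayleigh quotient.  As
   A_gamma = Ã + gamma G with Ã positive semidefinite, it lies in (0, 1]; and since
   B u = 0 forces G u = 0, the real and imaginary parts of x lie in S, whence z >= eta.
   The eigenvalue 0 is excluded because calA = [I, gamma B^T W^-1; 0, I] [Ã, B^T; B, 0]
   is invertible.  Finally, with W_gamma = -W / gamma,
   X calP - calA = diag((X - 1) I, I) [A_gamma, B^T; -B, X W_gamma], so
   (X - 1)^(n+m) divides det (X calP - calA) = det calP * char_poly (calP^-1 calA). *)

From mathcomp Require Import all_boot all_order all_algebra.
From mathcomp Require Import complex ring lra.
Import Order.TTheory GRing.Theory Num.Theory.
Local Open Scope ring_scope.

Section BilinearForms.
Context {R : realFieldType}.

Lemma bformDl {k} (x1 x2 y : 'cV[R]_k) (S : 'M[R]_k) :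
  bform (x1 + x2) S y = bform x1 S y + bform x2 S y.
Proof. by rewrite /bform linearD /= !mulmxDl mxE. Qed.

Lemma bformDr {k} (x y1 y2 : 'cV[R]_k) (S : 'M[R]_k) :
  bform x S (y1 + y2) = bform x S y1 + bform x S y2.
Proof. by rewrite /bform mulmxDr mxE. Qed.

Lemma bformZl {k} (a : R) (x y : 'cV[R]_k) (S : 'M[R]_k) :
  bform (a *: x) S y = a * bform x S y.
Proof. by rewrite /bform linearZ /= -!scalemxAl mxE. Qed.

Lemma bformZr {k} (a : R) (x y : 'cV[R]_k) (S : 'M[R]_k) :
  bform x S (a *: y) = a * bform x S y.
Proof. by rewrite /bform -scalemxAr mxE. Qed.

Lemma bform_mxD {k} (x y : 'cV[R]_k) (S1 S2 : 'M[R]_k) :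
  bform x (S1 + S2) y = bform x S1 y + bform x S2 y.
Proof. by rewrite /bform mulmxDr mulmxDl mxE. Qed.

Lemma bform_mxZ {k} (a : R) (x y : 'cV[R]_k) (S : 'M[R]_k) :
  bform x (a *: S) y = a * bform x S y.
Proof. by rewrite /bform -scalemxAr -scalemxAl mxE. Qed.

Lemma bform0l {k} (y : 'cV[R]_k) (S : 'M[R]_k) : bform 0 S y = 0.
Proof. by rewrite /bform trmx0 !mul0mx mxE. Qed.

Lemma bform_congr {k p} (x : 'cV[R]_k) (B : 'M[R]_(p, k)) (S : 'M[R]_p) :
  bform x (B^T *m S *m B) x = bform (B *m x) S (B *m x).
Proof. by rewrite /bform trmx_mul !mulmxA. Qed.

Lemma bformC {k} (x y : 'cV[R]_k) (S : 'M[R]_k) :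
  sym_mx S -> bform x S y = bform y S x.
Proof.
move=> symS; have xSy : (x^T *m S *m y)^T = y^T *m S *m x.
  by rewrite !trmx_mul trmxK symS mulmxA.
by rewrite /bform -xSy [RHS]mxE.
Qed.

Lemma cV_norm2_eq0 {k} (y : 'cV[R]_k) : (y^T *m y) 0 0 = 0 -> y = 0.
Proof.
rewrite mxE => /eqP; rewrite psumr_eq0 => [/allP y0|i _]; last first.
  by rewrite !mxE -expr2 sqr_ge0.
apply/matrixP => i j; rewrite (ord1 j) !mxE.
by have := y0 i (mem_index_enum i); rewrite !mxE -expr2 sqrf_eq0 => /eqP.
Qed.

Lemma quad_ge0_lin_eq0 (b c : R) :
  0 <= c -> (forall t, 0 <= 2 * t * b + t ^+ 2 * c) -> b = 0.
Proof.
(* at [t = - b / (c + 1)] the quadratic equals [- t ^+ 2 * (c + 2)] *)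
move=> c_ge0 hq; set t := - b / (c + 1).
have tc : t * (c + 1) = - b by rewrite /t mulfVK // gt_eqF //; lra.
have := hq t; nra.
Qed.

Lemma bform_eq0_psd {k} (S : 'M[R]_k) (x : 'cV[R]_k) :
  sym_mx S -> (forall v, 0 <= bform v S v) -> bform x S x = 0 -> S *m x = 0.
Proof.
move=> symS psdS x0; set y := S *m x; apply: cV_norm2_eq0.
have -> : (y^T *m y) 0 0 = bform y S x by rewrite /bform -mulmxA.
apply: (quad_ge0_lin_eq0 _ (bform y S y)) => // t.
have := psdS (x + t *: y).
rewrite bformDl !bformDr !bformZl !bformZr x0 (bformC x y S symS).
by congr (0 <= _); ring.
Qed.

Lemma spd_bform_ge0 {k} {S : 'M[R]_k} (x : 'cV[R]_k) : spd S -> 0 <= bform x S x.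
Proof.
case=> _ pdS; have [->|/pdS/ltW //] := eqVneq x 0.
by rewrite bform0l.
Qed.

Lemma spd_unitmx {k} {S : 'M[R]_k} : spd S -> S \in unitmx.
Proof.
case=> _ pdS; rewrite unitmxE unitfE; apply/negP => /det0P [v v0 Sv].
have := pdS v^T; rewrite trmx_eq0 v0 => /(_ isT).
by rewrite /bform trmxK Sv mul0mx mxE ltxx.
Qed.

Lemma spd_invmx {k} {S : 'M[R]_k} : spd S -> spd (invmx S).
Proof.
move=> spdS; have Su := spd_unitmx spdS; case: spdS => symS pdS; split.
  by rewrite /sym_mx trmx_inv symS.
move=> x x0; set y := invmx S *m x.
have xE : x = S *m y by rewrite /y mulKVmx.
have y0 : y != 0 by apply: contra x0 => /eqP y0; rewrite xE y0 mulmx0.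
have := pdS y y0; congr (0 < _).
by rewrite /bform /y trmx_mul trmx_inv symS mulmxKV // mulmxA.
Qed.

End BilinearForms.

Section SaddlePoint.
Context {R : realFieldType}.

Lemma Atilde_sym {n m} {A : 'M[R]_n} {A2 : 'M[R]_m} :
  spd A -> spsd A2 -> sym_mx (Atilde A A2).
Proof.
by move=> [symA _] [symA2 _]; rewrite /sym_mx tr_block_mx !trmx0 symA symA2.
Qed.

Lemma Atilde_bform_ge0 {n m} {A : 'M[R]_n} {A2 : 'M[R]_m} (x : 'cV[R]_(n + m)) :
  spd A -> spsd A2 -> 0 <= bform x (Atilde A A2) x.
Proof.
move=> spdA [_ psdA2]; rewrite -[x]vsubmxK /bform tr_col_mx mul_row_block.
rewrite !mulmx0 addr0 add0r mul_row_col mxE.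
by apply: addr_ge0; [exact: spd_bform_ge0 | exact: psdA2].
Qed.

Lemma sym_mx_congr {k p} (B : 'M[R]_(p, k)) {S : 'M[R]_p} :
  sym_mx S -> sym_mx (B^T *m S *m B).
Proof. by move=> symS; rewrite /sym_mx !trmx_mul trmxK symS mulmxA. Qed.

Lemma Agamma_spd {N l} {At : 'M[R]_N} {B : 'M[R]_(l, N)} {W : 'M[R]_l} {gamma : R} :
  sym_mx At -> (forall x, 0 <= bform x At x) ->
  (forall x : 'cV[R]_N, At *m x = 0 -> B *m x = 0 -> x = 0) ->
  0 < gamma -> spd W -> spd (Agamma At B W gamma).
Proof.
move=> symAt psdAt kerAtB g_gt0 spdW; have spdWi := spd_invmx spdW; split.
  by rewrite /sym_mx /Agamma linearD linearZ /= symAt (sym_mx_congr B spdWi.1).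
move=> x x0; rewrite /Agamma bform_mxD bform_mxZ bform_congr.
have At_ge0 := psdAt x.
have gWi_ge0 := mulr_ge0 (ltW g_gt0) (spd_bform_ge0 (B *m x) spdWi).
rewrite lt_def addr_ge0 // andbT paddr_eq0 //.
apply: contra x0 => /andP[/eqP Atx0 WiBx0]; apply/eqP/kerAtB.
  exact: bform_eq0_psd.
apply/eqP; apply: contraTT WiBx0 => Bx0.
by rewrite mulf_neq0 ?gt_eqF // spdWi.2.
Qed.

End SaddlePoint.

Section Preconditioner.
Context {F : fieldType} {N l : nat}.
Variables (At : 'M[F]_N) (B : 'M[F]_(l, N)) (W : 'M[F]_l) (gamma : F).
Local Notation Ag := (Agamma At B W gamma).
Local Notation G := (B^T *m invmx W *m B).

Lemma calA_factor :
  calA At B W gamma =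
  block_mx 1%:M (gamma *: (B^T *m invmx W)) 0 1%:M *m block_mx At B^T B 0.
Proof.
by rewrite mulmx_block !mul1mx !mul0mx !mulmx0 add0r !addr0 -scalemxAl.
Qed.

Lemma calA_unitmx : block_mx At B^T B 0 \in unitmx -> calA At B W gamma \in unitmx.
Proof.
by rewrite calA_factor unitmx_mul unitmxE det_ublock !det1 mulr1 unitr1.
Qed.

Lemma calP_unitmx :
  Ag \in unitmx -> W \in unitmx -> gamma != 0 -> calP At B W gamma \in unitmx.
Proof.
move=> Agu Wu g0; rewrite unitmxE det_ublock unitrM -!unitmxE Agu unitmxZ //.
by rewrite unitrN unitrV unitfE.
Qed.

Lemma calP_calA_left_eigen {x : 'rV[F]_N} {y : 'rV[F]_l} {z : F} :
  W \in unitmx -> gamma != 0 -> z != 0 -> z != 1 -> row_mx x y != 0 ->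
  row_mx x y *m calA At B W gamma = z *: (row_mx x y *m calP At B W gamma) ->
  x != 0 /\ z *: (x *m Ag) = gamma *: (x *m G).
Proof.
move=> Wu g0 z0 z1 xy0.
rewrite !mul_row_block !mulmx0 !addr0 scale_row_mx => /eq_row_mx [e1 e2].
have yB : y *m B = (z - 1) *: (x *m Ag).
  by rewrite scalerBl scale1r -e1 addrAC subrr add0r.
have yW : (z / gamma) *: (y *m W) = (z - 1) *: (x *m B^T).
  rewrite scalerBl scale1r {2}e2 scalerDr opprD addrA subrr add0r.
  by rewrite -scalemxAr scalerA mulrN scaleNr opprK.
have yWB : (z / gamma) *: (y *m B) = (z - 1) *: (x *m G).
  have := congr1 (mulmx^~ (invmx W *m B)) yW.
  by rewrite /= -!scalemxAl !mulmxA mulmxK.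
have zg0 : z / gamma != 0 by rewrite mulf_neq0 ?invr_neq0.
have z10 : z - 1 != 0 by rewrite subr_eq0.
split.
  apply: contraNneq xy0 => x0; move: yW; rewrite x0 mul0mx scaler0.
  move/eqP; rewrite scaler_eq0 (negbTE zg0) mulmx_free_eq0 ?row_free_unit //.
  by move/eqP->; rewrite row_mx0.
apply: (scalerI z10).
rewrite [RHS]scalerA [in RHS]mulrC -scalerA -yWB yB !scalerA.
by congr (_ *: _); field.
Qed.

End Preconditioner.

Section MapPreconditioner.
Context {F K : fieldType} (f : {rmorphism F -> K}) {N l : nat}.
Variables (At : 'M[F]_N) (B : 'M[F]_(l, N)) (W : 'M[F]_l) (gamma : F).

Lemma map_Agamma :
  map_mx f (Agamma At B W gamma) =
  Agamma (map_mx f At) (map_mx f B) (map_mx f W) (f gamma).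
Proof. by rewrite /Agamma map_mxD map_mxZ !map_mxM map_trmx map_invmx. Qed.

Lemma map_calA :
  map_mx f (calA At B W gamma) = calA (map_mx f At) (map_mx f B) (map_mx f W) (f gamma).
Proof. by rewrite /calA map_block_mx map_Agamma map_trmx map_mx0. Qed.

Lemma map_calP :
  map_mx f (calP At B W gamma) = calP (map_mx f At) (map_mx f B) (map_mx f W) (f gamma).
Proof.
by rewrite /calP map_block_mx map_Agamma map_trmx map_mx0 map_mxZ rmorphN fmorphV.
Qed.

End MapPreconditioner.

Lemma eigenvalue_invmx_mulP {F : fieldType} {k} {P A : 'M[F]_k} {z : F} :
  P \in unitmx -> eigenvalue (invmx P *m A) z ->
  exists2 w : 'rV_k, w != 0 & w *m A = z *: (w *m P).
Proof.
move=> Pu /eigenvalueP [v vM v0]; exists (v *m invmx P).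
  by rewrite mulmx_free_eq0 ?row_free_unit ?unitmx_inv.
by rewrite mulmxKV // -vM mulmxA.
Qed.

Lemma dvdp_char_poly_precond {F : fieldType} {N l} (Ag : 'M[F]_N) (Bt : 'M[F]_(N, l))
    (B : 'M[F]_(l, N)) (Wg : 'M[F]_l) :
  block_mx Ag Bt 0 Wg \in unitmx ->
  ('X - 1%:P) ^+ N %| char_poly (invmx (block_mx Ag Bt 0 Wg) *m block_mx Ag Bt B 0).
Proof.
set P := block_mx Ag Bt 0 Wg; set A := block_mx Ag Bt B 0 => Pu.
set M := invmx P *m A; set PX := map_mx polyC P.
have PM : PX *m char_poly_mx M = 'X *: PX - map_mx polyC A.
  by rewrite /char_poly_mx mulmxBr mul_mx_scalar -map_mxM /M mulKVmx.
have XPA : 'X *: PX - map_mx polyC A =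
    block_mx (('X - 1)%:M) 0 0 1%:M *m
    block_mx (map_mx polyC Ag) (map_mx polyC Bt)
             (- map_mx polyC B) ('X *: map_mx polyC Wg).
  rewrite /PX /P /A !map_block_mx scale_block_mx opp_block_mx add_block_mx mulmx_block.
  rewrite !map_mx0 !mul0mx !mul1mx !scaler0 !add0r !addr0 ?subr0 ?sub0r.
  by rewrite ?mul_scalar_mx ?scalerBl ?scale1r.
have := congr1 determinant PM.
rewrite det_mulmx XPA det_mulmx det_ublock det_scalar det1 mulr1 det_map_mx /= mul_polyC.
have detP0 : \det P != 0 by rewrite -unitfE -unitmxE.
by rewrite -(dvdpZr _ _ detP0) => ->; rewrite dvdp_mulr.
Qed.

Section ComplexForms.
Local Open Scope complex_scope.
Context {R : rcfType}.
Local Notation cm := (map_mx (real_complex R)).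
Local Notation Rem := (map_mx (@complex.Re R)).
Local Notation Imm := (map_mx (@complex.Im R)).

Lemma Re_mulmx_cm {p q k} (x : 'M[R[i]]_(p, q)) (M : 'M[R]_(q, k)) :
  Rem (x *m cm M) = Rem x *m M.
Proof.
apply/matrixP => i j; rewrite !mxE raddf_sum; apply: eq_bigr => k0 _.
by rewrite !mxE; case: (x i k0) => a b /=; rewrite mulr0 subr0.
Qed.

Lemma Im_mulmx_cm {p q k} (x : 'M[R[i]]_(p, q)) (M : 'M[R]_(q, k)) :
  Imm (x *m cm M) = Imm x *m M.
Proof.
apply/matrixP => i j; rewrite !mxE raddf_sum; apply: eq_bigr => k0 _.
by rewrite !mxE; case: (x i k0) => a b /=; rewrite mulr0 add0r.
Qed.

Lemma Re_mulmx_conj {k} (u v : 'rV[R[i]]_k) :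
  complex.Re ((u *m (map_mx conjc v)^T) 0 0) =
  (Rem u *m (Rem v)^T + Imm u *m (Imm v)^T) 0 0.
Proof.
rewrite !mxE raddf_sum -big_split; apply: eq_bigr => j _.
by rewrite !mxE; case: (u 0 j) (v 0 j) => [a b] [c d] /=; ring.
Qed.

Lemma Im_mulmx_conj {k} (u v : 'rV[R[i]]_k) :
  complex.Im ((u *m (map_mx conjc v)^T) 0 0) =
  (Imm u *m (Rem v)^T - Rem u *m (Imm v)^T) 0 0.
Proof.
rewrite !mxE raddf_sum -sumrB; apply: eq_bigr => j _.
by rewrite !mxE; case: (u 0 j) (v 0 j) => [a b] [c d] /=; ring.
Qed.

Definition cform {k} (S : 'M[R]_k) (x : 'rV[R[i]]_k) : R :=
  bform (Rem x)^T S (Rem x)^T + bform (Imm x)^T S (Imm x)^T.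

Lemma mulmx_conj_cform {k} {S : 'M[R]_k} (x : 'rV[R[i]]_k) :
  sym_mx S -> (x *m cm S *m (map_mx conjc x)^T) 0 0 = (cform S x)%:C.
Proof.
move=> symS; apply/eqP; rewrite eq_complex; apply/andP; split; apply/eqP.
  by rewrite Re_mulmx_conj Re_mulmx_cm Im_mulmx_cm mxE /cform /bform !trmxK.
have ba : Imm x *m S *m (Rem x)^T = Rem x *m S *m (Imm x)^T.
  apply/matrixP => i j; rewrite !ord1.
  by have := bformC (Imm x)^T (Rem x)^T S symS; rewrite /bform !trmxK.
by rewrite Im_mulmx_conj Re_mulmx_cm Im_mulmx_cm ba subrr mxE.
Qed.

Lemma cm_Re_Im {p q} (x : 'M[R[i]]_(p, q)) : x = cm (Rem x) + 'i *: cm (Imm x).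
Proof. by apply/matrixP => i j; rewrite !mxE {1}[x i j]complexE. Qed.

Lemma Re_Im_neq0 {p q} (x : 'M[R[i]]_(p, q)) : x != 0 -> (Rem x != 0) || (Imm x != 0).
Proof.
move=> x0; apply: contraTT x0; rewrite negb_or !negbK => /andP[/eqP a0 /eqP b0].
by rewrite [x]cm_Re_Im a0 b0 map_mx0 scaler0 addr0.
Qed.

Lemma cform_mxD {k} (S1 S2 : 'M[R]_k) (x : 'rV[R[i]]_k) :
  cform (S1 + S2) x = cform S1 x + cform S2 x.
Proof. by rewrite /cform !bform_mxD addrACA. Qed.

Lemma cform_mxZ {k} (a : R) (S : 'M[R]_k) (x : 'rV[R[i]]_k) :
  cform (a *: S) x = a * cform S x.
Proof. by rewrite /cform !bform_mxZ mulrDr. Qed.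

Lemma cform_ge0 {k} {S : 'M[R]_k} (x : 'rV[R[i]]_k) :
  (forall v, 0 <= bform v S v) -> 0 <= cform S x.
Proof. by move=> psdS; rewrite addr_ge0. Qed.

Lemma cform_gt0 {k} {S : 'M[R]_k} {x : 'rV[R[i]]_k} :
  spd S -> x != 0 -> 0 < cform S x.
Proof.
move=> spdS /Re_Im_neq0 /orP[a0|b0]; rewrite /cform.
  by rewrite ltr_wpDr ?spd_bform_ge0 ?spdS.2 ?trmx_eq0.
by rewrite ltr_wpDl ?spd_bform_ge0 ?spdS.2 ?trmx_eq0.
Qed.

Lemma cform_gen_eigen {k} (S1 S2 : 'M[R]_k) (x : 'rV[R[i]]_k) (z : R[i]) :
  spd S1 -> sym_mx S2 -> x != 0 -> z *: (x *m cm S1) = x *m cm S2 ->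
  z = (cform S2 x / cform S1 x)%:C.
Proof.
move=> spdS1 symS2 x0 /(congr1 (fun M => (M *m (map_mx conjc x)^T) 0 0)) /=.
rewrite -scalemxAl mxE (mulmx_conj_cform x spdS1.1) (mulmx_conj_cform x symS2) => zS.
have c1_0 : (cform S1 x)%:C != 0 by rewrite fmorph_eq0 gt_eqF ?cform_gt0.
by apply: (mulIf c1_0); rewrite zS -rmorphM mulfVK ?gt_eqF ?cform_gt0.
Qed.

End ComplexForms.

Section Spectrum.
Local Open Scope complex_scope.
Context {R : rcfType} {N l : nat} {At : 'M[R]_N} {B : 'M[R]_(l, N)} {W : 'M[R]_l}.
Context {gamma eta : R}.
Hypotheses (symAt : sym_mx At) (psdAt : forall x, 0 <= bform x At x).
Hypotheses (spdW : spd W) (gamma_gt0 : 0 < gamma).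
Hypothesis spdAg : spd (Agamma At B W gamma).
Local Notation cm := (map_mx (real_complex R)).
Local Notation Rem := (map_mx (@complex.Re R)).
Local Notation Imm := (map_mx (@complex.Im R)).
Local Notation Ag := (Agamma At B W gamma).
Local Notation G := (B^T *m invmx W *m B).

Lemma bform_G_ge0 (v : 'cV[R]_N) : 0 <= bform v G v.
Proof. by rewrite bform_congr (spd_bform_ge0 _ (spd_invmx spdW)). Qed.

Lemma Re_Im_inS {x : 'rV[R[i]]_N} {z : R[i]} :
  z != 0 -> z *: (x *m cm Ag) = gamma%:C *: (x *m cm G) ->
  inS At B (Rem x)^T /\ inS At B (Imm x)^T.
Proof.
move=> z0 eq_xz.
have xAt0 u : B *m u = 0 -> x *m cm (At *m u) = 0.
  move=> Bu0; have Gu0 : G *m u = 0 by rewrite -mulmxA Bu0 mulmx0.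
  move/(congr1 (mulmx^~ (cm u))): eq_xz.
  rewrite /= -!scalemxAl -!(mulmxA x) -!map_mxM Gu0.
  rewrite /Agamma mulmxDl -scalemxAl Gu0.
  rewrite scaler0 addr0 map_mx0 mulmx0 scaler0 => /eqP.
  by rewrite scaler_eq0 (negbTE z0) => /eqP.
split=> u /xAt0 xAtu0; rewrite bformC // /bform trmxK -mulmxA.
  by rewrite -Re_mulmx_cm xAtu0 map_mx0 mxE.
by rewrite -Im_mulmx_cm xAtu0 map_mx0 mxE.
Qed.

Lemma bform_Agamma (v : 'cV[R]_N) : bform v Ag v = bform v At v + gamma * bform v G v.
Proof. by rewrite bform_mxD bform_mxZ. Qed.

Lemma eta_bform_le (v : 'cV[R]_N) :
  is_eta At B W gamma eta -> inS At B v -> eta * bform v Ag v <= gamma * bform v G v.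
Proof.
move=> [_ eta_min] Sv; have [->|v0] := eqVneq v 0; first by rewrite !bform0l !mulr0.
have := eta_min v Sv v0; rewrite /eta_ratio -bform_Agamma.
by rewrite ler_pdivlMr // spdAg.2.
Qed.

Lemma eta_le1 : is_eta At B W gamma eta -> eta <= 1.
Proof.
move=> [[v [_ v0] <-] _]; rewrite /eta_ratio -bform_Agamma.
by rewrite ler_pdivrMr ?spdAg.2 // mul1r bform_Agamma lerDr.
Qed.

Lemma eta_cform_le {x : 'rV[R[i]]_N} :
  is_eta At B W gamma eta -> inS At B (Rem x)^T -> inS At B (Imm x)^T ->
  eta * cform Ag x <= gamma * cform G x.
Proof.
move=> heta Sa Sb; rewrite /cform !mulrDr.
by apply: lerD; apply: eta_bform_le.
Qed.

Lemma precond_eigenvalue_bounds (z : R[i]) :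
  block_mx At B^T B 0 \in unitmx -> is_eta At B W gamma eta ->
  eigenvalue (cm (invmx (calP At B W gamma) *m calA At B W gamma)) z ->
  complex.Im z = 0 /\ 0 < complex.Re z /\ eta <= complex.Re z /\ complex.Re z <= 1.
Proof.
move=> saddle_u heta; have Wu := spd_unitmx spdW; have g0 := lt0r_neq0 gamma_gt0.
have cPu : cm (calP At B W gamma) \in unitmx.
  by rewrite map_unitmx calP_unitmx ?spd_unitmx.
have cAu : cm (calA At B W gamma) \in unitmx by rewrite map_unitmx calA_unitmx.
rewrite map_mxM map_invmx => /(eigenvalue_invmx_mulP cPu) [w w0 ew].
have [->|z1] := eqVneq z 1.
  by split=> //; split; [exact: ltr01 | split; [exact: eta_le1 |]].
have z0 : z != 0.
  apply: contraNneq w0 => z0; move/eqP: ew; rewrite z0 scale0r.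
  by rewrite mulmx_free_eq0 ?row_free_unit.
rewrite map_calP map_calA -[w]hsubmxK in ew w0.
have cWu : cm W \in unitmx by rewrite map_unitmx.
have cg0 : gamma%:C != 0 by rewrite fmorph_eq0.
have [x0 eq_xz] := calP_calA_left_eigen _ _ _ _ cWu cg0 z0 z1 w0 ew.
set x := lsubmx w in x0 eq_xz.
rewrite -map_Agamma map_trmx -map_invmx -!map_mxM in eq_xz.
have symG := sym_mx_congr B (spd_invmx spdW).1.
have zE : z = (gamma * cform G x / cform Ag x)%:C.
  rewrite -cform_mxZ; apply: cform_gen_eigen => //.
    by rewrite /sym_mx linearZ /= symG.
  by rewrite eq_xz map_mxZ -scalemxAr.
have [Sa Sb] := Re_Im_inS z0 eq_xz.
have eta_le := eta_cform_le heta Sa Sb.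
have Ag_gt0 := cform_gt0 spdAg x0.
have At_ge0 := cform_ge0 x psdAt.
have G_ge0 := cform_ge0 x bform_G_ge0.
have AgE : cform Ag x = cform At x + gamma * cform G x by rewrite cform_mxD cform_mxZ.
have gG_gt0 : 0 < gamma * cform G x.
  rewrite lt_def (mulr_ge0 (ltW gamma_gt0) G_ge0) andbT.
  by apply: contra z0 => /eqP gG0; rewrite zE gG0 mul0r.
rewrite zE /=; split=> //; split; first exact: divr_gt0.
by rewrite ler_pdivlMr // ler_pdivrMr //; split; lra.
Qed.

End Spectrum.

Theorem mainTheorem1 (R : rcfType) (n m l : nat)
  (A : 'M[R]_n) (A2 : 'M[R]_m) (C : 'M[R]_(l, n)) (C2 : 'M[R]_(l, m))
  (W : 'M[R]_l) (gamma eta : R)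
  (* standing facts of the setting *)
  (hA : spd A)
  (hA2 : spsd A2)
  (hA2ker : forall x : 'cV[R]_m, A2 *m x = 0 <-> exists c : R, x = const_mx c)
  (hC : \rank C = l)
  (hker : forall x : 'cV[R]_(n + m),
      Atilde A A2 *m x = 0 -> Bmat C C2 *m x = 0 -> x = 0)
  (hsaddle : block_mx (Atilde A A2) (Bmat C C2)^T (Bmat C C2) 0 \in unitmx)
  (* hypotheses of the theorem *)
  (hgamma : 0 < gamma)
  (hW : spd W)
  (heta : is_eta (Atilde A A2) (Bmat C C2) W gamma eta) :
  let M := invmx (calP (Atilde A A2) (Bmat C C2) W gamma)
           *m calA (Atilde A A2) (Bmat C C2) W gamma in
  (forall z : R[i], eigenvalue (cplx_mx M) z ->
      complex.Im z = 0 /\ 0 < complex.Re z /\ eta <= complex.Re z /\ complex.Re z <= 1)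
  /\ ('X - 1%:P) ^+ (n + m) %| char_poly M.
Proof.
move=> M.
have symAt := Atilde_sym hA hA2.
have psdAt x := Atilde_bform_ge0 x hA hA2.
have spdAg := Agamma_spd symAt psdAt hker hgamma hW.
split=> [z|].
  exact: (precond_eigenvalue_bounds symAt psdAt hW hgamma spdAg).
apply: dvdp_char_poly_precond.
by rewrite calP_unitmx ?spd_unitmx ?lt0r_neq0.
Qed.
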